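(* Let $P\in\mathbb{C}[y]$ with $\deg P\geq 2$, $\delta\in\mathbb{C}\setminus\{0\}$, $h_1(x,y)=(y,P(y)-\delta x)$, $\theta\in(0,2\pi)\setminus\{\frac{\pi}{2},\pi,\frac{3\pi}{2}\}$, $R_\theta$ the linear map of $\mathbb{C}^2$ with matrix $\begin{pmatrix}\cos\theta&-\sin\theta\\ \sin\theta&\cos\theta\end{pmatrix}$, $h_2=R_\theta^{-1}\circ h_1\circ R_\theta$ and $G=\langle h_1,h_2\rangle$. Let $\nu=a_1\delta_{h_1}+a_2\delta_{h_2}+a_3\delta_{h_1^{-1}}+a_4\delta_{h_2^{-1}}$ with $a_i>0$ and $\sum_{i=1}^4a_i=1$, and equip $G^{\mathbb{N}}$ with the product measure $\nu^{\mathbb{N}}$. For $\omega=(\omega_n)\in G^{\mathbb{N}}$ put $S_n(\omega)=\omega_n\circ\cdots\circ\omega_1$. Then for $\nu^{\mathbb{N}}$-almost every $\omega$ the sequence $(\mathrm{length}(S_n(\omega)))_{n\in\mathbb{N}}$ is unbounded; in fact there is $\epsilon>0$ such that for $\nu^{\mathbb{N}}$-almost every $\omega$ one has $\mathrm{length}(S_n(\omega))\geq\epsilon n$ for all sufficiently large $n$.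
   Context: $\mathrm{length}(g)$ for $g\in G$ denotes the length of $g$ as a reduced word in the letters $h_1^{\pm1},h_2^{\pm1}$. *)

From HB Require Import structures.
From mathcomp Require Import all_boot all_order all_algebra.
From mathcomp Require Import all_classical all_reals all_analysis.
From mathcomp Require Import complex.
Set Implicit Arguments. Unset Strict Implicit. Unset Printing Implicit Defensive.
Import Order.TTheory GRing.Theory Num.Theory.
Local Open Scope ring_scope.
Local Open Scope classical_set_scope.

Section Henon.
Variable R : realType.
Local Notation C := R[i].

Definition pt := (C * C)%type.

Definition h1 (P : {poly C}) (delta : C) (z : pt) : pt :=
  (z.2, P.[z.2] - delta * z.1).

Definition h1inv (P : {poly C}) (delta : C) (z : pt) : pt :=
  ((P.[z.1] - z.2) / delta, z.1).

Local Open Scope complex_scope.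
Definition rot (t : R) (z : pt) : pt :=
  ((cos t)%:C * z.1 - (sin t)%:C * z.2, (sin t)%:C * z.1 + (cos t)%:C * z.2).

Definition rotinv (t : R) (z : pt) : pt := rot (- t) z.

Definition h2 P delta t : pt -> pt := rotinv t \o h1 P delta \o rot t.
Definition h2inv P delta t : pt -> pt := rotinv t \o h1inv P delta \o rot t.

Definition letter P delta t (l : 'I_4) : pt -> pt :=
  match val l with
  | 0%N => h1 P delta
  | 1%N => h2 P delta t
  | 2%N => h1inv P delta
  | _ => h2inv P delta t
  end.

Definition word_eval P delta t (s : seq 'I_4) : pt -> pt :=
  foldr (fun l f => letter P delta t l \o f) id s.

(* length of g: least length of a word in h1^{+-1}, h2^{+-1} representing g
   (= length of the reduced word representing g); 0 if g is not in G *)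
Definition word_length P delta t (g : pt -> pt) : nat :=
  let rep := fun n : nat =>
    `[< exists s : seq 'I_4, size s = n /\ word_eval P delta t s = g >] in
  match pselect (exists n, rep n) with
  | left H => ex_minn H
  | right _ => 0%N
  end.

(* S_n(omega) = omega_n o ... o omega_1  (here omega_{k+1} = letter (X k w)) *)
Fixpoint walk P delta t (X : nat -> 'I_4) (n : nat) : pt -> pt :=
  match n with
  | 0%N => id
  | n'.+1 => letter P delta t (X n') \o walk P delta t X n'
  end.

End Henon.

(* X is an i.i.d. sequence of letters with law a, i.e. the law of (X n)_n is
   the product measure nu^N (nu = sum_i a_i delta_{letter i}). *)
Definition iid_letters (R : realType) (d : measure_display) (T : measurableType d)
  (Pr : probability T R) (X : nat -> T -> 'I_4) (a : 'I_4 -> R) : Prop :=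
  (forall (k : nat) (l : 'I_4), measurable (X k @^-1` [set l])) /\
  (forall (n : nat) (x : 'I_n -> 'I_4),
     Pr [set w | forall k : 'I_n, X k w = x k] = (\prod_(k < n) a (x k))%:E).

From Pilot Require Import Defs.
From HB Require Import structures.
From mathcomp Require Import all_boot all_order all_algebra.
From mathcomp Require Import all_classical all_reals all_analysis.
From mathcomp Require Import complex ring lra.
Import Order.TTheory GRing.Theory Num.Theory ComplexField.Normc.
Set Implicit Arguments. Unset Strict Implicit. Unset Printing Implicit Defensive.
Local Open Scope ring_scope.
Local Open Scope classical_set_scope.

(* Ping-pong: for small [eta], far from the origin [h1] maps the complement of
   the cone [|y| < eta |x|] into the cone [|x| < eta |y|] and increases the norm
   (because deg P >= 2); [h1^-1] does the converse and [h2^{+-1}] the same with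
   the rotated cones.  As [theta] is not a multiple of [pi/2] the four cones are
   disjoint, so [G] is free on [h1, h2] and [length(S_n)] is at least the size
   of the freely reduced word of the first [n] steps.  This reduced word is a
   stack driven by i.i.d. letters; with [q = 1 - min a / 4], the quantity
   [q ^ #(letters of the stack at least as likely as their inverse)] decreases
   in expectation by a factor [rho < 1] at each step.  By Markov's inequality
   the stack is shorter than [n / N] with probability at most [sqrt rho ^ n],
   and Borel-Cantelli concludes. *)

(** * Free reduction of words in [h1^{+-1}, h2^{+-1}] *)

Definition o0 : 'I_4 := @Ordinal 4 0 isT.
Definition o1 : 'I_4 := @Ordinal 4 1 isT.
Definition o2 : 'I_4 := @Ordinal 4 2 isT.
Definition o3 : 'I_4 := @Ordinal 4 3 isT.

Definition invl (l : 'I_4) : 'I_4 := inZp (l + 2).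

Lemma invlK : involutive invl.
Proof. by case=> [[|[|[|[|n]]]] Hl] //; apply: val_inj. Qed.

(* [push l st] is the free reduction of [l :: st] when [st] is reduced. *)
Definition push (l : 'I_4) (st : seq 'I_4) :=
  if st is m :: st' then (if m == invl l then st' else l :: st) else [:: l].

Definition red (s : seq 'I_4) := foldr push [::] s.

Fixpoint reduced (s : seq 'I_4) : bool :=
  if s is l :: ((m :: _) as s') then (m != invl l) && reduced s' else true.

Definition invw (s : seq 'I_4) := rev (map invl s).

Lemma push_reduced l st : reduced st -> reduced (push l st).
Proof.
case: st => //= m st; case: ifP => [_|/= ->] //.
by case: st => //= m' st /andP[].
Qed.

Lemma red_reduced s : reduced (red s).
Proof. by elim: s => //= l s; apply: push_reduced. Qed.

Lemma size_push l st : (size st <= (size (push l st)).+1)%N.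
Proof. by case: st => //= m st; case: ifP => //= _; rewrite ltnW. Qed.

Lemma size_foldr_push w st : (size st <= size (foldr push st w) + size w)%N.
Proof.
elim: w => [|l w IH] /=; first by rewrite addn0.
by rewrite addnS -addSn (leq_trans IH) // leq_add2r size_push.
Qed.

Section WordEval.
Variables (R : realType) (P : {poly R[i]}) (delta : R[i]) (t : R).
Local Notation eval := (word_eval P delta t).
Local Notation letter := (letter P delta t).

Lemma word_eval_cat s1 s2 z : eval (s1 ++ s2) z = eval s1 (eval s2 z).
Proof. by elim: s1 => //= l s1 IH; rewrite /comp -IH. Qed.

Hypothesis letterK : forall l, cancel (letter (invl l)) (letter l).

Lemma letterVK l : cancel (letter l) (letter (invl l)).
Proof. by rewrite -{1}(invlK l); apply: letterK. Qed.

Lemma word_eval_push l st z : eval (push l st) z = letter l (eval st z).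
Proof. by case: st => //= m st; case: ifP => //= /eqP ->; rewrite /comp letterK. Qed.

Lemma word_eval_red s z : eval (red s) z = eval s z.
Proof. by elim: s => //= l s IH; rewrite word_eval_push IH. Qed.

Lemma word_eval_invw s z : eval (invw s) (eval s z) = z.
Proof.
elim: s z => //= l s IH z.
by rewrite /invw /= rev_cons -cats1 word_eval_cat /= /comp letterVK IH.
Qed.

Hypothesis free : forall s, reduced s -> eval s =1 id -> s = [::].

Lemma size_red_le_word_length u : (size (red u) <= word_length P delta t (eval u))%N.
Proof.
rewrite /word_length; case: pselect => [H|[]]; last first.
  by exists (size u); apply/asboolP; exists u.
case: ex_minnP => m /asboolP [s [<- Hs]] _.
have red0 : red (invw s ++ u) = [::].
  apply: free; first exact: red_reduced.
  by move=> z; rewrite word_eval_red word_eval_cat -Hs word_eval_invw.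
have := size_foldr_push (invw s) (red u).
by rewrite -foldr_cat -/(red _) red0 /invw size_rev size_map.
Qed.

End WordEval.

Section Trig.
Variable R : realType.

Lemma sin_neq0 (t : R) : 0 < t -> t < 2 * pi -> t != pi -> sin t != 0.
Proof.
move=> t0 t2 tpi; have pi0 := pi_gt0 R.
have [tpi'|pit] := ltP t pi; first by rewrite gt_eqF // sin_gt0_pi // t0.
rewrite -(subrK pi t) sinDpi oppr_eq0 gt_eqF // sin_gt0_pi //.
by move: pit; rewrite le_eqVlt eq_sym (negPf tpi) /= => pit; apply/andP; split; lra.
Qed.

Lemma cos_neq0 (t : R) : 0 < t -> t < 2 * pi -> t != pi / 2 -> t != 3 * pi / 2 ->
  cos t != 0.
Proof.
move=> t0 t2 th t3h; have pi0 := pi_gt0 R.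
have [tl|tg] := ltP t (pi / 2).
  by rewrite gt_eqF // cos_gt0_pihalf //; apply/andP; split; lra.
move: tg; rewrite le_eqVlt eq_sym (negPf th) /= => tg.
have [tl2|tg2] := ltP t (3 * pi / 2).
  rewrite -(subrK pi t) cosDpi oppr_eq0 gt_eqF // cos_gt0_pihalf //.
  by apply/andP; split; lra.
move: tg2; rewrite le_eqVlt eq_sym (negPf t3h) /= => tg2.
rewrite -(subrK (pi *+ 2) t) cosD2pi gt_eqF // cos_gt0_pihalf //.
by apply/andP; split; rewrite -mulr_natl; lra.
Qed.

Lemma rotK (t : R) : cancel (Defs.rot (- t)) (Defs.rot t).
Proof.
case=> x y; rewrite /Defs.rot /= cosN sinN rmorphN /=.
set c := (cos t)%:C%C; set s := (sin t)%:C%C.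
have cs1 : c * c + s * s = 1.
  by rewrite /c /s -!rmorphM -rmorphD /= -!expr2 cos2Dsin2.
congr pair.
  by transitivity (x * (c * c + s * s)); [ring | rewrite cs1 mulr1].
by transitivity (y * (c * c + s * s)); [ring | rewrite cs1 mulr1].
Qed.

Lemma rotNK (t : R) : cancel (Defs.rot t) (Defs.rot (- t)).
Proof. by move=> z; rewrite -{2}(opprK t) rotK. Qed.

End Trig.

Lemma letterK (R : realType) (P : {poly R[i]}) (delta : R[i]) (t : R) :
  delta != 0 -> forall l, cancel (letter P delta t (invl l)) (letter P delta t l).
Proof.
move=> d0.
have h1K : cancel (h1inv P delta) (h1 P delta).
  case=> x y; rewrite /h1 /h1inv /=; congr pair.
  by rewrite mulrC divfK // opprB addrC subrK.
have h1invK : cancel (h1 P delta) (h1inv P delta).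
  case=> x y; rewrite /h1 /h1inv /=; congr pair.
  by rewrite opprB addrC subrK (mulrC delta) mulfK.
case=> [[|[|[|[|n]]]] Hl] // z; rewrite /letter /h2 /h2inv /rotinv /= rotK.
  by rewrite h1K rotNK.
by rewrite h1invK rotNK.
Qed.

(** * The ping-pong argument *)

Section ComplexNorm.
Variable R : realType.
Implicit Types x y : R[i].

Lemma normc_ge0 x : 0 <= normc x.
Proof. by case: x => a b; rewrite sqrtr_ge0. Qed.

Lemma normc_eq0 x : (normc x == 0) = (x == 0).
Proof. by apply/eqP/eqP => [/eq0_normc|->] //; rewrite normc0. Qed.

Lemma normc_real (a : R) : normc (a%:C)%C = `|a|.
Proof. by rewrite /normc /= expr0n /= addr0 sqrtr_sqr. Qed.

Lemma normcX x n : normc (x ^+ n) = normc x ^+ n.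
Proof. by elim: n => [|n IH]; rewrite ?normc1 // !exprS normcM IH. Qed.

Lemma normc_sum I (r : seq I) (F : I -> R[i]) :
  normc (\sum_(i <- r) F i) <= \sum_(i <- r) normc (F i).
Proof.
elim: r => [|i r IH]; first by rewrite !big_nil normc0.
by rewrite !big_cons (le_trans (le_normcD _ _)) // lerD2l.
Qed.

Lemma normcB_ge x y : normc x - normc y <= normc (x - y).
Proof. by have := le_normcD (x - y) y; rewrite subrK; lra. Qed.

Lemma normc_comb_le (a b : R) x y :
  normc ((a%:C)%C * x + (b%:C)%C * y) <= `|a| * normc x + `|b| * normc y.
Proof. by rewrite -!normc_real -!normcM le_normcD. Qed.

Lemma normc_comb_ge (a b : R) x y :
  `|a| * normc x - `|b| * normc y <= normc ((a%:C)%C * x + (b%:C)%C * y).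
Proof.
rewrite -!normc_real -!normcM -(normcN (_ * y)).
by have := normcB_ge ((a%:C)%C * x) (- ((b%:C)%C * y)); rewrite opprK.
Qed.

End ComplexNorm.

Section HornerGrowth.
Variables (R : realType) (P : {poly R[i]}).
Hypothesis sizeP : (2 < size P)%N.

Let d := (size P).-1.
Let lc := normc (lead_coef P).
Let Sc := \sum_(i < d) normc P`_i.

Let lc_gt0 : 0 < lc.
Proof.
rewrite lt_def normc_ge0 andbT normc_eq0 lead_coef_eq0 -size_poly_eq0.
by rewrite -lt0n (ltn_trans _ sizeP).
Qed.

Let Sc_ge0 : 0 <= Sc.
Proof. by apply: sumr_ge0 => i _; exact: normc_ge0. Qed.

Lemma normc_horner_ge y : 1 <= normc y -> normc y * (lc * normc y - Sc) <= normc P.[y].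
Proof.
move=> y1; have sizeP_d : size P = d.+1 by rewrite /d prednK // (ltn_trans _ sizeP).
have d2 : (2 <= d)%N by rewrite -ltnS -sizeP_d.
rewrite (horner_coef_wide y (_ : size P <= d.+1)%N) ?sizeP_d // big_ord_recr /=.
set low := \sum_(i < d) _; set Y := normc y in y1 *; set E := Y ^+ d.-1.
have lowE : normc low <= Sc * E.
  rewrite (le_trans (normc_sum _ _)) // /Sc big_distrl /= ler_sum // => i _.
  rewrite normcM normcX ler_wpM2l ?normc_ge0 // ler_weXn2l //.
  by rewrite -ltnS prednK ?ltn_ord // (ltn_trans _ d2).
have topE : normc (lead_coef P * y ^+ d) = lc * (Y * E).
  by rewrite normcM normcX -exprS prednK // (ltn_trans _ d2).
have YE : Y <= E by rewrite ler_eXnr // -ltnS prednK // (ltn_trans _ d2).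
have := normcB_ge (lead_coef P * y ^+ d) (- low).
rewrite opprK normcN topE addrC.
have [pos|neg] := leP 0 (lc * Y - Sc); last first.
  by move=> _; apply: le_trans (normc_ge0 _); rewrite mulr_ge0_le0 ?(ltW neg) //; lra.
have : Y * (lc * Y - Sc) <= E * (lc * Y - Sc) by apply: ler_wpM2r.
nra.
Qed.

(* Degree at least 2 is what makes [P.[y]] beat every linear term. *)
Lemma horner_growth (alpha : R[i]) (M L : R) : 0 <= M ->
  exists R0 : R, forall y v, R0 <= normc y -> normc v <= M * normc y ->
    L * normc y < normc (P.[y] - alpha * v).
Proof.
move=> M0; have a0 := normc_ge0 alpha; have lc0 := ltW lc_gt0.
set c := `|L| + Sc + normc alpha * M.
have c0 : 0 <= c by rewrite !addr_ge0 ?mulr_ge0.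
exists (1 + c / lc) => y v yR0 vM.
have y1 : 1 <= normc y by apply: le_trans yR0; rewrite lerDl divr_ge0.
have lcY : lc + c <= lc * normc y.
  by have := ler_wpM2l lc0 yR0; rewrite mulrDr mulr1 mulrCA divff ?gt_eqF // mulr1.
have Py := normc_horner_ge y1.
have := normcB_ge P.[y] (alpha * v); rewrite normcM.
have av : normc alpha * normc v <= normc alpha * (M * normc y) by rewrite ler_wpM2l.
set Y := normc y in y1 lcY Py av *.
have Y0 : 0 <= Y by lra.
have YlcY : Y * (lc + c) <= Y * (lc * Y) := ler_wpM2l Y0 lcY.
have YL : Y * L <= Y * `|L| := ler_wpM2l Y0 (ler_norm L).
have Ylc : 0 < Y * lc by rewrite mulr_gt0 //; lra.
rewrite /c in YlcY; nra.
Qed.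

End HornerGrowth.

Definition sqnorm (R : realType) (z : pt R) := normc z.1 ^+ 2 + normc z.2 ^+ 2.

Lemma sqnorm_rot (R : realType) (t : R) z : sqnorm (Defs.rot t z) = sqnorm z.
Proof.
case: z => [[a1 b1] [a2 b2]]; rewrite /sqnorm /Defs.rot /normc /=; simpc.
rewrite /= !sqr_sqrtr ?addr_ge0 ?sqr_ge0 //.
transitivity ((cos t ^+ 2 + sin t ^+ 2) * (a1 ^+ 2 + b1 ^+ 2 + (a2 ^+ 2 + b2 ^+ 2))).
  by ring.
by rewrite cos2Dsin2 mul1r.
Qed.

Lemma cone_separation (R : realFieldType) (x y eta p1 q1 q2 p2 : R) :
  x < eta * y -> p1 * y - q1 * x < eta * (q2 * x + p2 * y) ->
  0 <= x -> 0 <= y -> 0 < eta -> 3 * eta <= p1 -> p1 <= 1 ->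
  0 <= q1 -> q1 <= 1 -> 0 <= q2 -> q2 <= 1 -> 0 <= p2 -> p2 <= 1 -> False.
Proof.
move=> xy + x0 y0 e0 ep1 p11 q10 q11 q20 q21 p20 p21.
have : q1 * x <= x by nra.
have : eta * (q2 * x + p2 * y) <= eta * (x + y).
  by apply: ler_wpM2l; [exact: ltW | apply: lerD; nra].
have : eta * x <= eta * (eta * y) by apply: ler_wpM2l; [exact: ltW | exact: ltW].
have : eta * eta * y <= eta * y / 3 by nra.
nra.
Qed.

Section PingPong.
Variables (R : realType) (P : {poly R[i]}) (delta : R[i]) (t : R).
Hypotheses (sizeP : (2 < size P)%N) (delta_neq0 : delta != 0).
Hypotheses (sin_t_neq0 : sin t != 0) (cos_t_neq0 : cos t != 0).

Local Notation rt := (Defs.rot t).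
Local Notation letter := (letter P delta t).

Let S := `|sin t|.
Let C := `|cos t|.
Let eta := Num.min S C / 3.
Let B := eta^-1.

Let eta_gt0 : 0 < eta.
Proof. by rewrite divr_gt0 // lt_min !normr_gt0 sin_t_neq0 cos_t_neq0. Qed.
Let etaS : 3 * eta <= S. Proof. by rewrite mulrC divfK // ge_min lexx. Qed.
Let etaC : 3 * eta <= C. Proof. by rewrite mulrC divfK // ge_min lexx orbT. Qed.
Let S_ge0 : 0 <= S. Proof. exact: normr_ge0. Qed.
Let C_ge0 : 0 <= C. Proof. exact: normr_ge0. Qed.
Let S_le1 : S <= 1. Proof. exact: sin_max. Qed.
Let C_le1 : C <= 1. Proof. exact: cos_max. Qed.
Let B_gt0 : 0 < B. Proof. by rewrite invr_gt0. Qed.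
Let BetaE : B * eta = 1. Proof. by rewrite mulVf // gt_eqF. Qed.

Definition vcone (z : pt R) := normc z.1 < eta * normc z.2.
Definition hcone (z : pt R) := normc z.2 < eta * normc z.1.

Definition domain (l : 'I_4) (z : pt R) :=
  match val l with
  | 0%N => vcone z
  | 1%N => vcone (rt z)
  | 2%N => hcone z
  | _ => hcone (rt z)
  end.

Lemma rot_coord1_bounds z :
  [/\ S * normc z.2 - C * normc z.1 <= normc (rt z).1,
      C * normc z.1 - S * normc z.2 <= normc (rt z).1 &
      normc (rt z).1 <= C * normc z.1 + S * normc z.2].
Proof.
have -> : (rt z).1 = (cos t)%:C%C * z.1 + (- sin t)%:C%C * z.2.
  by rewrite /Defs.rot rmorphN mulNr.
rewrite /S -(normrN (sin t)); split; last exact: normc_comb_le.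
  by rewrite (addrC ((cos t)%:C%C * z.1)); apply: normc_comb_ge.
exact: normc_comb_ge.
Qed.

Lemma rot_coord2_bounds z :
  [/\ C * normc z.2 - S * normc z.1 <= normc (rt z).2,
      S * normc z.1 - C * normc z.2 <= normc (rt z).2 &
      normc (rt z).2 <= S * normc z.1 + C * normc z.2].
Proof.
split; last exact: normc_comb_le.
  by rewrite /= (addrC ((sin t)%:C%C * z.1)); apply: normc_comb_ge.
exact: normc_comb_ge.
Qed.

Lemma vcone_hcone z : vcone z -> hcone z -> False.
Proof.
rewrite /vcone /hcone => v h; have := normc_ge0 z.1; have := normc_ge0 z.2.
have := etaS; have := S_le1; have := eta_gt0; nra.
Qed.

Lemma vcone_rot_vcone z : vcone z -> vcone (rt z) -> False.
Proof.
rewrite /vcone => v rv; have [b1 _ _] := rot_coord1_bounds z.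
have [_ _ b2] := rot_coord2_bounds z.
by apply: (@cone_separation _ _ _ eta S C S C v
  (le_lt_trans b1 (lt_le_trans rv (ler_wpM2l (ltW eta_gt0) b2))));
  rewrite ?normc_ge0.
Qed.

Lemma vcone_rot_hcone z : vcone z -> hcone (rt z) -> False.
Proof.
rewrite /vcone /hcone => v rh; have [_ _ b1] := rot_coord1_bounds z.
have [b2 _ _] := rot_coord2_bounds z.
by apply: (@cone_separation _ _ _ eta C S C S v
  (le_lt_trans b2 (lt_le_trans rh (ler_wpM2l (ltW eta_gt0) b1))));
  rewrite ?normc_ge0.
Qed.

Lemma hcone_rot_vcone z : hcone z -> vcone (rt z) -> False.
Proof.
rewrite /vcone /hcone => h rv; have [_ b1 _] := rot_coord1_bounds z.
have [_ _ b2] := rot_coord2_bounds z.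
rewrite addrC in b2.
by apply: (@cone_separation _ _ _ eta C S C S h
  (le_lt_trans b1 (lt_le_trans rv (ler_wpM2l (ltW eta_gt0) b2))));
  rewrite ?normc_ge0.
Qed.

Lemma hcone_rot_hcone z : hcone z -> hcone (rt z) -> False.
Proof.
rewrite /vcone /hcone => h rh; have [_ _ b1] := rot_coord1_bounds z.
have [_ b2 _] := rot_coord2_bounds z.
rewrite addrC in b1.
by apply: (@cone_separation _ _ _ eta S C S C h
  (le_lt_trans b2 (lt_le_trans rh (ler_wpM2l (ltW eta_gt0) b1))));
  rewrite ?normc_ge0.
Qed.

Lemma domain_disjoint l m z : domain l z -> domain m z -> l = m.
Proof.
have lt_disj (i j : 'I_4) : (i < j)%N -> domain i z -> domain j z -> False.
  case: i j => [[|[|[|[|?]]]] ?] [[|[|[|[|?]]]] ?] //= _; rewrite /domain /=.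
  - exact: vcone_rot_vcone.
  - exact: vcone_hcone.
  - exact: vcone_rot_hcone.
  - by move=> rv h; apply: hcone_rot_vcone h rv.
  - exact: vcone_hcone.
  - exact: hcone_rot_hcone.
move=> dl dm; apply: ord_inj.
by case: (ssrnat.ltngtP l m) => // lt; [case: (lt_disj l m) | case: (lt_disj m l)].
Qed.

Section Dynamics.
Variable R0 : R.
Hypothesis growth_h1 : forall y v, R0 <= normc y -> normc v <= B * normc y ->
  B * normc y < normc (P.[y] - delta * v).
Hypothesis growth_h1inv : forall y v, R0 <= normc y -> normc v <= B * normc y ->
  B * normc delta * normc y < normc (P.[y] - v).

Let K := (B ^+ 2 + 1) * R0 ^+ 2.

Let K_ge0 : 0 <= K.
Proof. by rewrite mulr_ge0 // ?addr_ge0 ?sqr_ge0. Qed.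

Lemma large_coord (X Y : R) : 0 <= X -> 0 <= Y -> X <= B * Y ->
  K < X ^+ 2 + Y ^+ 2 -> R0 <= Y.
Proof.
move=> X0 Y0 XY KXY; rewrite leNgt; apply/negP => YR0.
have XX : X * X <= (B * Y) * (B * Y) by apply: ler_pM.
have YY : Y * Y <= R0 * R0 by apply: ler_pM => //; lra.
have : B * B * (Y * Y) <= B * B * (R0 * R0).
  by apply: ler_wpM2l => //; rewrite mulr_ge0 // ltW.
by move: KXY; rewrite /K !expr2; nra.
Qed.

Lemma h1_pingpong z : K < sqnorm z -> ~ hcone z ->
  vcone (h1 P delta z) /\ sqnorm z < sqnorm (h1 P delta z).
Proof.
case: z => x y; rewrite /hcone /vcone /sqnorm /h1 /= => Kz.
move=> /negP; rewrite -leNgt => yx.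
have xy : normc x <= B * normc y.
  by have := ler_wpM2l (ltW B_gt0) yx; rewrite mulrA BetaE mul1r.
have := growth_h1 (large_coord (normc_ge0 _) (normc_ge0 _) xy Kz) xy.
set w := normc _ => Bw; split.
  by move: Bw; rewrite -(ltr_pM2l eta_gt0) mulrA (mulrC eta) BetaE mul1r.
have := le_lt_trans xy Bw.
have := normc_ge0 x; rewrite !expr2; nra.
Qed.

Lemma h1inv_pingpong z : K < sqnorm z -> ~ vcone z ->
  hcone (h1inv P delta z) /\ sqnorm z < sqnorm (h1inv P delta z).
Proof.
case: z => x y; rewrite /hcone /vcone /sqnorm /h1inv /= => Kz.
move=> /negP; rewrite -leNgt => xy.
have yx : normc y <= B * normc x.
  by have := ler_wpM2l (ltW B_gt0) xy; rewrite mulrA BetaE mul1r.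
rewrite addrC in Kz.
have := growth_h1inv (large_coord (normc_ge0 _) (normc_ge0 _) yx Kz) yx.
have d0 : 0 < normc delta by rewrite lt_def normc_ge0 normc_eq0 delta_neq0.
rewrite mulrAC -ltr_pdivlMr // -normcV -normcM.
set w := normc _ => Bw; split.
  by move: Bw; rewrite -(ltr_pM2l eta_gt0) mulrA (mulrC eta) BetaE mul1r.
have := le_lt_trans yx Bw.
have := normc_ge0 y; rewrite addrC !expr2; nra.
Qed.

Lemma letter_pingpong l z : K < sqnorm z -> ~ domain (invl l) z ->
  domain l (letter l z) /\ sqnorm z < sqnorm (letter l z).
Proof.
case: l => [[|[|[|[|n]]]] Hl] //=; rewrite /domain /letter /= => Kz dz.
- exact: h1_pingpong.
- rewrite /h2 /rotinv /= rotK !sqnorm_rot -(sqnorm_rot t z).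
  by apply: h1_pingpong; rewrite ?sqnorm_rot.
- exact: h1inv_pingpong.
- rewrite /h2inv /rotinv /= rotK !sqnorm_rot -(sqnorm_rot t z).
  by apply: h1inv_pingpong; rewrite ?sqnorm_rot.
Qed.

Lemma word_pingpong s l z : reduced (l :: s) -> K < sqnorm z ->
  ~ domain (invl (last l s)) z ->
  domain l (word_eval P delta t (l :: s) z) /\
  sqnorm z < sqnorm (word_eval P delta t (l :: s) z).
Proof.
elim: s l => [|m s IH] l; first by move=> _; apply: letter_pingpong.
move=> /= /andP[ml red_ms] Kz dz; have [dm zm] := IH m red_ms Kz dz.
have [dl ml'] : domain l (letter l (word_eval P delta t (m :: s) z)) /\
    sqnorm (word_eval P delta t (m :: s) z) <
    sqnorm (letter l (word_eval P delta t (m :: s) z)).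
  apply: letter_pingpong (lt_trans Kz zm) _ => dinv.
  by move/eqP: ml; apply; rewrite (domain_disjoint dm dinv).
by split => //; apply: lt_trans zm ml'.
Qed.

Lemma exists_start_point k : exists2 z, K < sqnorm z & ~ domain k z.
Proof.
have K0 := K_ge0; pose X := K + 1; have X0 : 0 < X by rewrite /X; lra.
have KX : K < X ^+ 2 by rewrite /X; nra.
have nX : normc (X%:C)%C = X by rewrite normc_real gtr0_norm.
have n0 : normc (0 : R[i]) = 0 by apply/eqP; rewrite normc_eq0.
have v : domain o0 (0, X%:C%C).
  by rewrite /domain [val _]/= /vcone n0 nX mulr_gt0.
have h : domain o2 (X%:C%C, 0).
  by rewrite /domain [val _]/= /hcone n0 nX mulr_gt0.
have [->|k2] := eqVneq k o2.
  exists (0, X%:C%C); first by rewrite /sqnorm n0 nX expr0n add0r.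
  by move=> /(domain_disjoint v) /(congr1 val).
exists (X%:C%C, 0); first by rewrite /sqnorm n0 nX expr0n addr0.
by move=> /(domain_disjoint h) e; move: k2; rewrite e eqxx.
Qed.

Lemma reduced_eval_id_nil s : reduced s -> word_eval P delta t s =1 id -> s = [::].
Proof.
case: s => // l s red_s eval_id.
have [z Kz dz] := exists_start_point (invl (last l s)).
have [_] := word_pingpong red_s Kz dz.
by rewrite eval_id ltxx.
Qed.

End Dynamics.

Lemma free_group s : reduced s -> word_eval P delta t s =1 id -> s = [::].
Proof.
have [R1 growth1] := horner_growth sizeP delta B (ltW B_gt0).
have [R2 growth2] := horner_growth sizeP 1 (B * normc delta) (ltW B_gt0).
apply: (@reduced_eval_id_nil (Num.max R1 R2)).
- by move=> y v yR; apply: growth1; apply: le_trans yR; rewrite le_max lexx.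
- move=> y v yR vB; rewrite -[v]mul1r; apply: (growth2 _ _ _ vB).
  by apply: le_trans yR; rewrite le_max lexx orbT.
Qed.

End PingPong.

(** * Drift of the reduced word of the random walk *)

Lemma enum_ord4 : enum 'I_4 = [:: o0; o1; o2; o3].
Proof. by apply: (inj_map val_inj); rewrite val_enum_ord. Qed.

Lemma ord4P (l : 'I_4) : [\/ l = o0, l = o1, l = o2 | l = o3].
Proof.
case: l => [[|[|[|[|n]]]] Hl] //.
- by constructor 1; apply: val_inj.
- by constructor 2; apply: val_inj.
- by constructor 3; apply: val_inj.
- by constructor 4; apply: val_inj.
Qed.

Lemma invl_o0 : invl o0 = o2. Proof. exact: val_inj. Qed.
Lemma invl_o1 : invl o1 = o3. Proof. exact: val_inj. Qed.
Lemma invl_o2 : invl o2 = o0. Proof. exact: val_inj. Qed.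
Lemma invl_o3 : invl o3 = o1. Proof. exact: val_inj. Qed.

Definition stack (st w : seq 'I_4) := foldl (fun s l => push l s) st w.

Lemma stack_nil s : stack [::] s = red (rev s).
Proof. by rewrite /stack -{1}(revK s) foldl_rev. Qed.

Fixpoint words n : seq (seq 'I_4) :=
  if n is n'.+1 then [seq l :: w | l <- enum 'I_4, w <- words n'] else [:: [::]].

Lemma size_words n w : w \in words n -> size w = n.
Proof.
elim: n w => [|n IH] w /=; first by rewrite inE => /eqP ->.
by move/allpairsPdep => [l [w' [_ /IH <- ->]]].
Qed.

Lemma mem_words w : w \in words (size w).
Proof.
elim: w => //= l w IH.
by apply: (allpairs_f_dep (fun l w => l :: w)); rewrite ?mem_enum.
Qed.

Lemma lyap_drift_nil_ineq (R : realFieldType) (a0 a1 a2 a3 m u : R) :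
  0 < m -> m <= a0 -> m <= a1 -> m <= a2 -> m <= a3 ->
  a0 + a1 + a2 + a3 = 1 -> u = m / 4 ->
  a0 * (1 - u) ^+ (a2 <= a0)%R + a1 * (1 - u) ^+ (a3 <= a1)%R
  + a2 * (1 - u) ^+ (a0 <= a2)%R + a3 * (1 - u) ^+ (a1 <= a3)%R <= 1 - u * m / 2.
Proof.
move=> m0 h0 h1 h2 h3 sum1 um; have u0 : 0 < u by rewrite um; lra.
by case: (leP a2 a0); case: (leP a0 a2); case: (leP a3 a1); case: (leP a1 a3);
  rewrite /= ?expr1 ?expr0 ?mulr1; nra.
Qed.

Lemma lyap_drift_cons_ineq (R : realFieldType) (am ai ap aq m u : R) :
  0 < m -> m <= am -> m <= ai -> m <= ap -> m <= aq ->
  am + ai + ap + aq = 1 -> u = m / 4 ->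
  am * (1 - u) ^+ (ai <= am)%R * (1 - u) ^+ (ai <= am)%R
  + ap * (1 - u) ^+ (aq <= ap)%R * (1 - u) ^+ (ai <= am)%R
  + aq * (1 - u) ^+ (ap <= aq)%R * (1 - u) ^+ (ai <= am)%R + ai
  <= (1 - u * m / 2) * (1 - u) ^+ (ai <= am)%R.
Proof.
move=> m0 hm hi hp hq sum1 um; have u0 : 0 < u by rewrite um; lra.
have m14 : m <= 1 / 4 by lra.
have : u * am <= am / 16 by nra.
have : u * ai <= ai / 16 by nra.
have : u * ap <= ap / 16 by nra.
have : u * aq <= aq / 16 by nra.
by case: (leP ai am); case: (leP aq ap); case: (leP ap aq);
  rewrite /= ?expr1 ?expr0 ?mulr1; nra.
Qed.

Section Drift.
Variables (R : realType) (a : 'I_4 -> R).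
Hypotheses (a_gt0 : forall l, 0 < a l) (a_sum1 : \sum_(l < 4) a l = 1).

Definition amin := Num.min (Num.min (a o0) (a o1)) (Num.min (a o2) (a o3)).
Definition lyap_base := 1 - amin / 4.
Definition drift_rate := 1 - amin / 4 * amin / 2.
Definition likely (l : 'I_4) := a (invl l) <= a l.
Definition lyap (st : seq 'I_4) := lyap_base ^+ count likely st.

Lemma amin_le l : amin <= a l.
Proof. by case: (ord4P l) => ->; rewrite !ge_min lexx ?orbT. Qed.

Lemma amin_gt0 : 0 < amin.
Proof. by rewrite !lt_min !a_gt0. Qed.

Lemma sum_a4 : a o0 + a o1 + a o2 + a o3 = 1.
Proof.
rewrite -a_sum1 !big_ord_recl big_ord0 addr0 !addrA.
by congr (_ + _ + _ + _); congr a; apply: val_inj.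
Qed.

Lemma amin_le_quarter : amin <= 1 / 4.
Proof. by have := sum_a4; have := amin_le o0; have := amin_le o1;
  have := amin_le o2; have := amin_le o3; lra. Qed.

Lemma lyap_base_ge_half : 1 / 2 <= lyap_base.
Proof. by have := amin_le_quarter; rewrite /lyap_base; lra. Qed.
Lemma lyap_base_le1 : lyap_base <= 1.
Proof. by have := amin_gt0; rewrite /lyap_base; lra. Qed.
Lemma drift_rate_gt0 : 0 < drift_rate.
Proof. by have := amin_le_quarter; have := amin_gt0; rewrite /drift_rate; nra. Qed.
Lemma drift_rate_lt1 : drift_rate < 1.
Proof. by have := amin_gt0; rewrite /drift_rate; nra. Qed.

Lemma lyap_ge0 st : 0 <= lyap st.
Proof. by rewrite exprn_ge0 // (le_trans _ lyap_base_ge_half). Qed.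

(* Pushes never increase [lyap]; popping the top letter [m] (probability
   [a (invl m)]) divides it by [lyap_base] only if [m] is likely, i.e. only
   with probability at most [a m]. *)
Lemma lyap_drift st :
  \sum_(l <- enum 'I_4) a l * lyap (push l st) <= drift_rate * lyap st.
Proof.
have m0 := amin_gt0; have := sum_a4.
have := amin_le o0; have := amin_le o1; have := amin_le o2; have := amin_le o3.
rewrite enum_ord4 !big_cons big_nil addr0 => h3 h2 h1 h0 sum1.
case: st => [|m st].
  rewrite /lyap /= /likely invl_o0 invl_o1 invl_o2 invl_o3 !addn0 expr0 mulr1.
  have := lyap_drift_nil_ineq m0 h0 h1 h2 h3 sum1 erefl.
  by rewrite -/lyap_base -/drift_rate; lra.
have lyap_cons l st' : lyap (l :: st') = lyap_base ^+ likely l * lyap st'.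
  by rewrite /lyap /= exprD.
have push_cons l : lyap (push l (m :: st)) = if m == invl l then lyap st
    else lyap_base ^+ likely l * lyap_base ^+ likely m * lyap st.
  by rewrite /push; case: ifP => // _; rewrite !lyap_cons mulrA.
rewrite !push_cons lyap_cons mulrA /likely.
have L0 := lyap_ge0 st.
case: (ord4P m) => ->; rewrite invl_o0 invl_o1 invl_o2 invl_o3 /=.
- have := lyap_drift_cons_ineq m0 h0 h2 h1 h3 ltac:(lra) erefl.
  by rewrite -/lyap_base -/drift_rate => /(ler_wpM2r L0); lra.
- have := lyap_drift_cons_ineq m0 h1 h3 h0 h2 ltac:(lra) erefl.
  by rewrite -/lyap_base -/drift_rate => /(ler_wpM2r L0); lra.
- have := lyap_drift_cons_ineq m0 h2 h0 h1 h3 ltac:(lra) erefl.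
  by rewrite -/lyap_base -/drift_rate => /(ler_wpM2r L0); lra.
- have := lyap_drift_cons_ineq m0 h3 h1 h0 h2 ltac:(lra) erefl.
  by rewrite -/lyap_base -/drift_rate => /(ler_wpM2r L0); lra.
Qed.

Definition wprod (w : seq 'I_4) := \prod_(l <- w) a l.

Lemma wprod_ge0 w : 0 <= wprod w.
Proof. by apply: prodr_ge0 => l _; exact: ltW. Qed.

Lemma expected_lyap_le n st :
  \sum_(w <- words n) wprod w * lyap (stack st w) <= drift_rate ^+ n * lyap st.
Proof.
elim: n st => [|n IH] st /=; first by rewrite big_seq1 /wprod big_nil !mul1r.
rewrite big_allpairs_dep /=.
apply: (@le_trans _ _
  (\sum_(l <- enum 'I_4) a l * (drift_rate ^+ n * lyap (push l st)))).
  apply: ler_sum => l _; apply: le_trans (ler_wpM2l (ltW (a_gt0 l)) (IH _)).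
  by rewrite big_distrr ler_sum // => w _; rewrite /wprod big_cons -mulrA.
under eq_bigr do rewrite mulrCA; rewrite -mulr_sumr exprSr -mulrA.
by apply: ler_wpM2l; [rewrite exprn_ge0 ?ltW ?drift_rate_gt0 | exact: lyap_drift].
Qed.

Definition short_rate := Num.sqrt drift_rate.

Lemma short_rate_gt0 : 0 < short_rate.
Proof. by rewrite sqrtr_gt0 drift_rate_gt0. Qed.
Lemma short_rate_lt1 : short_rate < 1.
Proof. by rewrite -sqrtr1 ltr_sqrt // drift_rate_lt1. Qed.
Lemma sqr_short_rate : short_rate ^+ 2 = drift_rate.
Proof. by rewrite sqr_sqrtr // ltW // drift_rate_gt0. Qed.

Lemma exists_short_rate_pow_le_lyap_base :
  exists2 N : nat, (0 < N)%N & short_rate ^+ N <= lyap_base.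
Proof.
have rate_norm : `|short_rate| < 1 by rewrite gtr0_norm ?short_rate_gt0 ?short_rate_lt1.
have lyap_base_gt0 : 0 < lyap_base by apply: lt_le_trans lyap_base_ge_half.
have [N _ rateN] := cvgr0_norm_le _ (cvg_expr rate_norm) _ lyap_base_gt0.
exists N.+1 => //; have := rateN N.+1 (leqnSn N).
by rewrite /= gtr0_norm ?exprn_gt0 ?short_rate_gt0.
Qed.

Definition short (N n : nat) (w : seq 'I_4) := (N * size (stack [::] w) < n)%N.

(* A Markov inequality for [lyap]: short stacks have large [lyap]. *)
Lemma short_words_mass N n : short_rate ^+ N <= lyap_base ->
  \sum_(w <- words n | short N n w) wprod w <= short_rate ^+ n.
Proof.
move=> rateN; have g0 := short_rate_gt0; have g1 := short_rate_lt1.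
have q2 := lyap_base_ge_half.
have lyap_short w : short N n w -> short_rate ^+ n <= lyap (stack [::] w).
  rewrite /short; set s := size _ => sn.
  apply: (@le_trans _ _ (lyap_base ^+ s)); last first.
    by rewrite /lyap ler_wiXn2l ?count_size ?lyap_base_le1 //; lra.
  apply: (@le_trans _ _ ((short_rate ^+ N) ^+ s)); last first.
    by apply: lerXn2r => //; rewrite nnegrE ?exprn_ge0 ?ltW //; lra.
  by rewrite -exprM ler_wiXn2l ?ltW // ltnW.
rewrite -(ler_pM2l (exprn_gt0 n g0)).
apply: (@le_trans _ _ (\sum_(w <- words n) wprod w * lyap (stack [::] w))).
  rewrite mulr_sumr big_mkcond /= ler_sum // => w _.
  case: ifP => sh; last by rewrite mulr_ge0 ?wprod_ge0 ?lyap_ge0.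
  by rewrite mulrC ler_wpM2l ?wprod_ge0 ?lyap_short.
apply: le_trans (expected_lyap_le n [::]) _.
by rewrite /lyap expr0 mulr1 -sqr_short_rate -exprM mulnC exprM expr2.
Qed.

End Drift.

(** * Borel-Cantelli *)

Section BorelCantelli.
Variables (d : measure_display) (T : measurableType d) (R : realType).
Variable mu : {measure set T -> \bar R}.

Lemma measure_bigsetU_le (I : Type) (s : seq I) (P : pred I) (F : I -> set T) :
  (forall i, measurable (F i)) ->
  (mu (\big[setU/set0]_(i <- s | P i) F i) <= \sum_(i <- s | P i) mu (F i))%E.
Proof.
move=> mF; elim: s => [|i s IH]; first by rewrite !big_nil measure0.
rewrite !big_cons; case: ifP => _ //.
apply: le_trans (measureU2 _ _ _) _ => //; first exact: bigsetU_measurable.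
exact: leeD2l.
Qed.

Lemma nneseries_lt_oo_geometric (F : (set T)^nat) (g : R) : 0 < g < 1 ->
  (forall n, mu (F n) <= (g ^+ n)%:E)%E -> (\sum_(n <oo) mu (F n) < +oo)%E.
Proof.
move=> /andP[g0 g1] Fg; apply: (@le_lt_trans _ _ (\sum_(n <oo) (g ^+ n)%:E)%E).
  by apply: lee_nneseries => n _.
apply: (@le_lt_trans _ _ ((1 - g)^-1)%:E); last exact: ltry.
apply: lime_le.
  by apply: is_cvg_nneseries => n _ _; rewrite lee_fin exprn_ge0 // ltW.
apply: nearW => n; rewrite sumEFin lee_fin.
have := @geometric_le_lim R n 1 g ler01 g0; rewrite gtr0_norm // mul1r => /(_ g1).
by apply: le_trans; rewrite /series /= ler_sum // => k _; rewrite /geometric /= mul1r.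
Qed.

Lemma ae_eventually_notin (F : (set T)^nat) : (forall n, measurable (F n)) ->
  (\sum_(n <oo) mu (F n) < +oo)%E ->
  {ae mu, forall x, exists n0, forall n, (n0 <= n)%N -> ~ F n x}.
Proof.
move=> mF sumF; exists (lim_sup_set F); split.
- by apply: bigcapT_measurable => n; apply: bigcup_measurable => k _.
- exact: lim_sup_set_cvg0.
- move=> x /= often n _; apply: contrapT => never; apply: often.
  by exists n => k kn Fk; apply: never; exists k.
Qed.

End BorelCantelli.

Section ShortStackEvents.
Variables (R : realType) (a : 'I_4 -> R).
Hypotheses (a_gt0 : forall l, 0 < a l) (a_sum1 : \sum_(l < 4) a l = 1).
Variables (d : measure_display) (T : measurableType d) (Pr : probability T R).
Variable X : nat -> T -> 'I_4.
Hypothesis iidX : iid_letters Pr X a.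

Definition cylinder n w := [set om | forall k : 'I_n, X k om = nth o0 w k].

Lemma measurable_cylinder n w : measurable (cylinder n w).
Proof.
have -> : cylinder n w =
    \bigcap_k (if (k < n)%N then X k @^-1` [set nth o0 w k] else setT).
  apply/seteqP; split => om /=.
    by move=> Xw k _; case: ifP => // kn; exact: (Xw (Ordinal kn)).
  by move=> Xw k; have := Xw k I; rewrite ltn_ord.
apply: bigcapT_measurable => k; case: ifP => _; [exact: iidX.1 | exact: measurableT].
Qed.

Lemma cylinder_prob n w : size w = n -> Pr (cylinder n w) = (wprod a w)%:E.
Proof. by move=> <-; rewrite /cylinder iidX.2 /wprod (big_nth o0) big_mkord. Qed.

Definition short_event N n := \big[setU/set0]_(w <- words n | short N n w) cylinder n w.

Lemma short_event_prob N n : short_rate a ^+ N <= lyap_base a ->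
  (Pr (short_event N n) <= (short_rate a ^+ n)%:E)%E.
Proof.
move=> rateN; apply: le_trans.
  by apply: measure_bigsetU_le => w; apply: measurable_cylinder.
rewrite big_seq_cond (eq_bigr (fun w => (wprod a w)%:E)); last first.
  by move=> w /andP[/size_words wn _]; apply: cylinder_prob.
by rewrite -big_seq_cond sumEFin lee_fin short_words_mass.
Qed.

Lemma short_event_mkseq N n om :
  short N n (mkseq (X^~ om) n) -> short_event N n om.
Proof.
move=> sh; rewrite /short_event -(size_mkseq (X^~ om) n).
elim: (words _) (mem_words (mkseq (X^~ om) n)) => // w ws IH.
rewrite inE big_cons => /orP[/eqP <-|/IH ?]; last by case: ifP => _ //; right.
by rewrite size_mkseq sh; left => k; rewrite nth_mkseq.
Qed.

Lemma ae_long_stacks N : short_rate a ^+ N <= lyap_base a ->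
  {ae Pr, forall om, exists n0, forall n, (n0 <= n)%N ->
    (n <= N * size (stack [::] (mkseq (X^~ om) n)))%N}.
Proof.
move=> rateN.
have mF n : measurable (short_event N n).
  by apply: bigsetU_measurable => w _; apply: measurable_cylinder.
have rate01 : 0 < short_rate a < 1 by rewrite short_rate_gt0 ?short_rate_lt1.
have sumF := nneseries_lt_oo_geometric rate01 (fun n => short_event_prob n rateN).
apply: filterS (ae_eventually_notin mF sumF) => om [n0 notsh].
by exists n0 => n /notsh notsh_n; rewrite leqNgt; apply/negP => /short_event_mkseq.
Qed.

End ShortStackEvents.

Lemma walk_word_eval (R : realType) (P : {poly R[i]}) delta t (Y : nat -> 'I_4) n :
  walk P delta t Y n = word_eval P delta t (rev (mkseq Y n)).
Proof. by elim: n => //= n ->; rewrite mkseqS rev_rcons. Qed.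

Lemma eventually_linear_lb (R : realFieldType) (N : nat) (f : nat -> nat) : (0 < N)%N ->
  (exists n0, forall n, (n0 <= n)%N -> (n <= N * f n)%N) ->
  (forall M, exists n, (M < f n)%N) /\
  (exists n0, forall n, (n0 <= n)%N -> N%:R^-1 * n%:R <= (f n)%:R :> R).
Proof.
move=> N0 [n0 Nf]; split; last first.
  by exists n0 => n /Nf; rewrite mulrC ler_pdivrMr ?ltr0n // -natrM ler_nat mulnC.
move=> M; exists (maxn n0 (N * M.+1)).
have := leq_trans (leq_maxr n0 (N * M.+1)) (Nf _ (leq_maxl _ _)).
by rewrite leq_pmul2l.
Qed.

Theorem mainTheorem3 (R : realType) (P : {poly R[i]}) (delta : R[i]) (t : R)
  (a : 'I_4 -> R) :
  (2 < size P)%N -> delta != 0 ->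
  0 < t -> t < 2 * pi -> t != pi / 2 -> t != pi -> t != 3 * pi / 2 ->
  (forall i, 0 < a i) -> \sum_(i < 4) a i = 1 ->
  exists2 eps : R, 0 < eps &
    forall (d : measure_display) (T : measurableType d) (Pr : probability T R)
           (X : nat -> T -> 'I_4),
      iid_letters Pr X a ->
      {ae Pr, forall w,
         (forall M : nat, exists n : nat, (M < word_length P delta t (walk P delta t (X ^~ w) n))%N) /\
         (exists n0 : nat, forall n : nat, (n0 <= n)%N ->
            eps * n%:R <= (word_length P delta t (walk P delta t (X ^~ w) n))%:R)}.
Proof.
move=> sizeP delta0 t0 t2pi tpi2 tpi t3pi2 a_gt0 a_sum1.
have sin_t := sin_neq0 t0 t2pi tpi; have cos_t := cos_neq0 t0 t2pi tpi2 t3pi2.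
have free := free_group sizeP delta0 sin_t cos_t.
have [N N0 rateN] := exists_short_rate_pow_le_lyap_base a_gt0 a_sum1.
exists N%:R^-1; first by rewrite invr_gt0 ltr0n.
move=> d T Pr X iidX.
apply: filterS (ae_long_stacks a_gt0 a_sum1 iidX rateN) => om [n0 long].
apply: eventually_linear_lb N0 _; exists n0 => n /long /leq_trans; apply.
rewrite leq_mul2l stack_nil walk_word_eval size_red_le_word_length ?orbT //.
exact: letterK.
Qed.
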